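(* Let $e_1,e_2$ be KAT expressions. Every execution of $\mathsf{equiv}(\{(\{e_1\},\{e_2\})\},\emptyset)$ terminates (i.e. after finitely many recursive calls it returns $\mathsf{True}$ or $\mathsf{False}$), regardless of which pair is selected from $S$ at each call.
   Context: Let $\Sigma$ be a finite nonempty set of action symbols and $T=\{t_1,\dots,t_l\}$ a finite nonempty set of test symbols. Boolean expressions: $b::=0\mid 1\mid t\mid \overline{b}\mid b_1+b_2\mid b_1 b_2$; KAT expressions (syntactic terms): $e::=p\in\Sigma\mid b\mid e_1+e_2\mid e_1e_2\mid e^*$. $\mathsf{At}$ is the set of atoms (words $b_1\cdots b_l$ with $b_i\in\{t_i,\overline{t_i}\}$), identified with truth assignments to $T$; $\alpha\le b$ means $b$ is true under $\alpha$. $\mathsf{E}_\alpha(p)=0$; $\mathsf{E}_\alpha(b)=1$ iff $\alpha\le b$; $\mathsf{E}_\alpha(e_1+e_2)=\max(\mathsf{E}_\alpha(e_1),\mathsf{E}_\alpha(e_2))$; $\mathsf{E}_\alpha(e_1e_2)=\mathsf{E}_\alpha(e_1)\mathsf{E}_\alpha(e_2)$; $\mathsf{E}_\alpha(e^* )=1$; for a finite set $E$ of expressions, $\mathsf{E}_\alpha(E)=\max_{e\in E}\mathsf{E}_\alpha(e)$ ($0$ if $E=\emptyset$). The function $\mathsf{f}$ maps an expression to a set of pairs in $(\mathsf{At}\cdot\Sigma)\times\mathsf{Exp}$: $\mathsf{f}(p)=\{(\alpha p,1)\mid\alpha\in\mathsf{At}\}$; $\mathsf{f}(b)=\emptyset$;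 $\mathsf{f}(e_1+e_2)=\mathsf{f}(e_1)\cup\mathsf{f}(e_2)$; $\mathsf{f}(e_1e_2)=\mathsf{f}(e_1)\cdot e_2\cup\{(\alpha p,e)\in\mathsf{f}(e_2)\mid\mathsf{E}_\alpha(e_1)=1\}$; $\mathsf{f}(e^* )=\mathsf{f}(e)\cdot e^*$, where $P\cdot e=\{(\alpha p,e'e)\mid(\alpha p,e')\in P\}$ if $e$ is neither the constant $0$ nor $1$, $P\cdot0=\emptyset$, $P\cdot1=P$. For a set $E$, $\mathsf{f}(E)=\bigcup_{e\in E}\mathsf{f}(e)$, $\mathsf{der}_{\alpha p}(E)=\{e'\mid(\alpha p,e')\in\mathsf{f}(E)\}$, and $\mathsf{hd}(E)=\{\alpha p\mid(\alpha p,e')\in\mathsf{f}(E)\}$. Define $\mathsf{derivatives}(E_1,E_2)=\{(\mathsf{der}_{\alpha p}(E_1),\mathsf{der}_{\alpha p}(E_2))\mid\alpha p\in\mathsf{hd}(E_1\cup E_2)\}$. The procedure $\mathsf{equiv}(S,H)$, where $S,H$ are sets of pairs of finite sets of KAT expressions, is: $\mathsf{equiv}(\emptyset,H)=\mathsf{True}$; otherwise choose some pair $(E_1,E_2)\in S$ and write $S=\{(E_1,E_2)\}\cup S_0$ with $(E_1,E_2)\notin S_0$; if there exists $\alpha\in\mathsf{At}$ with $\mathsf{E}_\alpha(E_1)\ne\mathsf{E}_\alpha(E_2)$ return $\mathsf{False}$; otherwise let $H'=\{(E_1,E_2)\}\cup H$, $S'=\{d\in\mathsf{derivatives}(E_1,E_2)\mid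 d\notin H'\}$, and return $\mathsf{equiv}(S_0\cup S',H')$. *)

From HB Require Import structures.
From mathcomp Require Import all_boot.

Set Implicit Arguments.
Unset Strict Implicit.
Unset Printing Implicit Defensive.

(* Test symbols T = {t_1,...,t_l} are indexed by 'I_l. *)
Inductive bexp (l : nat) : Type :=
  | BZero | BOne | BTest of 'I_l | BNeg of bexp l
  | BPlus of bexp l & bexp l | BMul of bexp l & bexp l.

Inductive kexp (Sigma : Type) (l : nat) : Type :=
  | KAct of Sigma
  | KTest of bexp l
  | KPlus of kexp Sigma l & kexp Sigma l
  | KSeq of kexp Sigma l & kexp Sigma l
  | KStar of kexp Sigma l.

Arguments BZero {l}. Arguments BOne {l}.
Arguments KAct {Sigma l}. Arguments KTest {Sigma l}.
Arguments KPlus {Sigma l}. Arguments KSeq {Sigma l}. Arguments KStar {Sigma l}.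

Fixpoint bexp_eqb l (b1 b2 : bexp l) : bool :=
  match b1, b2 with
  | BZero, BZero => true
  | BOne, BOne => true
  | BTest i, BTest j => i == j
  | BNeg a, BNeg b => bexp_eqb a b
  | BPlus a1 a2, BPlus b1 b2 => bexp_eqb a1 b1 && bexp_eqb a2 b2
  | BMul a1 a2, BMul b1 b2 => bexp_eqb a1 b1 && bexp_eqb a2 b2
  | _, _ => false
  end.

Lemma bexp_eqP l : Equality.axiom (@bexp_eqb l).
Proof.
elim=> [|| i | a IHa | a1 IH1 a2 IH2 | a1 IH1 a2 IH2]
       [|| j | b | b1 b2 | b1 b2] /=; try by constructor.
- by apply: (iffP eqP) => [->|[->]].
- by apply: (iffP (IHa b)) => [->|[->]].
- by apply: (iffP andP) => [[/IH1 -> /IH2 ->]|[<- <-]]; split; [apply/IH1|apply/IH2].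
- by apply: (iffP andP) => [[/IH1 -> /IH2 ->]|[<- <-]]; split; [apply/IH1|apply/IH2].
Qed.

HB.instance Definition _ l := hasDecEq.Build (bexp l) (@bexp_eqP l).

Fixpoint kexp_eqb (Sigma : eqType) l (e1 e2 : kexp Sigma l) : bool :=
  match e1, e2 with
  | KAct p, KAct q => p == q
  | KTest a, KTest b => a == b
  | KPlus a1 a2, KPlus b1 b2 => kexp_eqb a1 b1 && kexp_eqb a2 b2
  | KSeq a1 a2, KSeq b1 b2 => kexp_eqb a1 b1 && kexp_eqb a2 b2
  | KStar a, KStar b => kexp_eqb a b
  | _, _ => false
  end.

Lemma kexp_eqP (Sigma : eqType) l : Equality.axiom (@kexp_eqb Sigma l).
Proof.
elim=> [p | a | a1 IH1 a2 IH2 | a1 IH1 a2 IH2 | a IHa]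
       [q | b | b1 b2 | b1 b2 | b] /=; try by constructor.
- by apply: (iffP eqP) => [->|[->]].
- by apply: (iffP eqP) => [->|[->]].
- by apply: (iffP andP) => [[/IH1 -> /IH2 ->]|[<- <-]]; split; [apply/IH1|apply/IH2].
- by apply: (iffP andP) => [[/IH1 -> /IH2 ->]|[<- <-]]; split; [apply/IH1|apply/IH2].
- by apply: (iffP (IHa b)) => [->|[->]].
Qed.

HB.instance Definition _ (Sigma : eqType) l :=
  hasDecEq.Build (kexp Sigma l) (@kexp_eqP Sigma l).

Section KAT.
Variables (Sigma : finType) (l : nat).

(* Atoms = truth assignments to the test symbols. *)
Definition atom := {ffun 'I_l -> bool}.

(* alpha <= b  iff  b is true under alpha *)
Fixpoint beval (a : atom) (b : bexp l) : bool :=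
  match b with
  | BZero => false
  | BOne => true
  | BTest i => a i
  | BNeg b => ~~ beval a b
  | BPlus b1 b2 => beval a b1 || beval a b2
  | BMul b1 b2 => beval a b1 && beval a b2
  end.

Notation exp := (kexp Sigma l).

(* E_alpha, with values in {0,1} represented as bool (max = ||, product = &&) *)
Fixpoint Eps (a : atom) (e : exp) : bool :=
  match e with
  | KAct _ => false
  | KTest b => beval a b
  | KPlus e1 e2 => Eps a e1 || Eps a e2
  | KSeq e1 e2 => Eps a e1 && Eps a e2
  | KStar _ => true
  end.

Definition EpsS (a : atom) (E : seq exp) : bool := has (Eps a) E.

Definition cdot (P : seq ((atom * Sigma) * exp)) (e : exp)
  : seq ((atom * Sigma) * exp) :=
  match e with
  | KTest BZero => [::]
  | KTest BOne => P
  | _ => [seq (x.1, KSeq x.2 e) | x <- P]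
  end.

Fixpoint f (e : exp) : seq ((atom * Sigma) * exp) :=
  match e with
  | KAct p => [seq ((a, p), KTest BOne) | a <- enum {: atom}]
  | KTest _ => [::]
  | KPlus e1 e2 => f e1 ++ f e2
  | KSeq e1 e2 => cdot (f e1) e2 ++ [seq x <- f e2 | Eps x.1.1 e1]
  | KStar e1 => cdot (f e1) (KStar e1)
  end.

Definition fS (E : seq exp) := flatten (map f E).
Definition der (ap : atom * Sigma) (E : seq exp) : seq exp :=
  [seq x.2 | x <- fS E & x.1 == ap].
Definition hd (E : seq exp) : seq (atom * Sigma) := [seq x.1 | x <- fS E].
Definition derivatives (E1 E2 : seq exp) : seq (seq exp * seq exp) :=
  [seq (der ap E1, der ap E2) | ap <- hd (E1 ++ E2)].

(* Finite sets are represented by lists, compared extensionally. *)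
Definition seteqb (A B : seq exp) : bool := all (mem B) A && all (mem A) B.
Definition pair_eqb (d d' : seq exp * seq exp) : bool :=
  seteqb d.1 d'.1 && seteqb d.2 d'.2.
Definition pin (d : seq exp * seq exp) (S : seq (seq exp * seq exp)) : bool :=
  has (pair_eqb d) S.
Definition sseteq (S S' : seq (seq exp * seq exp)) : Prop :=
  all (fun d => pin d S') S /\ all (fun d => pin d S) S'.

Definition state := (seq (seq exp * seq exp) * seq (seq exp * seq exp))%type.

(* equiv_step (S', H') (S, H): the call equiv(S,H) does not return
   (S nonempty, chosen pair passes the atom test) and makes the
   recursive call equiv(S', H'), for some choice of the pair (E1,E2). *)
Definition equiv_step (next cur : state) : Prop :=
  let: (Sc, Hc) := cur in
  let: (Sn, Hn) := next in
  exists (d : seq exp * seq exp) (S0 : seq (seq exp * seq exp)),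
    [/\ sseteq Sc (d :: S0), ~~ pin d S0,
        (forall a : atom, EpsS a d.1 = EpsS a d.2),
        sseteq Hn (d :: Hc) &
        sseteq Sn (S0 ++ [seq d' <- derivatives d.1 d.2 | ~~ pin d' Hn])].

End KAT.

From mathcomp Require Import all_boot.
From mathcomp Require Import zify.

Set Implicit Arguments.
Unset Strict Implicit.
Unset Printing Implicit Defensive.

(* 1. Antimirov-style closure.  For each expression e we define a finite
      list [pderivs e] over-approximating all its iterated partial
      derivatives, and show that [e :: pderivs e] is closed under taking
      the expressions of [f].  Hence every set of expressions ever built
      by [equiv] from ({e1},{e2}) is a subset of U1 = e1 :: pderivs e1
      (first component), resp. U2 = e2 :: pderivs e2 (second component).
   2. Such a pair of subsets is determined, up to set equality, by its
      signature: a pair of boolean vectors indexed by U1 and U2.  These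
      signatures form a finite type.
   3. Invariant: all pairs of S and H lie in U1 x U2 and no pair of S is
      already in H.  Each step preserves it and adds to H a pair whose
      signature was not there before, so the number of signatures of H
      strictly increases while staying below the size of the finite type;
      a bounded increasing measure gives accessibility. *)

Lemma acc_bounded_measure (A : Type) (R : A -> A -> Prop) (I : A -> Prop)
    (m : A -> nat) (B : nat) :
  (forall x y, I x -> R y x -> I y /\ m x < m y) -> (forall x, m x <= B) ->
  forall x, I x -> Acc R x.
Proof.
move=> step bounded x; move: {2}(B - m x) (leqnn (B - m x)) => n.
elim: n x => [|n IH] x hn hx; constructor=> y hxy.
all: have [hy lt_xy] := step x y hx hxy; have := bounded y.
- lia.
- by move=> le_yB; apply: IH hy; lia.
Qed.

Section Signature.
Variable T : eqType.

Definition signature (U A : seq T) : {ffun 'I_(size U) -> bool} :=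
  [ffun i => tnth (in_tuple U) i \in A].

Lemma signature_eq (U A B : seq T) : A =i B -> signature U A = signature U B.
Proof. by move=> eqAB; apply/ffunP => i; rewrite !ffunE eqAB. Qed.

Lemma signature_inj (U A B : seq T) :
  {subset A <= U} -> {subset B <= U} -> signature U A = signature U B ->
  A =i B.
Proof.
move=> sAU sBU /ffunP sigAB x.
case xU: (x \in U); last by rewrite (contraFF (sAU x) xU) (contraFF (sBU x) xU).
have /tnthP[i ->] : x \in in_tuple U by [].
by have := sigAB i; rewrite !ffunE.
Qed.

End Signature.

Section PartialDerivatives.
Variables (Sigma : finType) (l : nat).
Local Notation exp := (kexp Sigma l).

Definition dcdot (L : seq exp) (e : exp) : seq exp :=
  match e with
  | KTest BZero => [::]
  | KTest BOne => L
  | _ => [seq KSeq x e | x <- L]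
  end.

Lemma cdot_snd (P : seq ((atom l * Sigma) * exp)) (e : exp) :
  map snd (cdot P e) = dcdot (map snd P) e.
Proof. by case: e => [p|[||i|b|b1 b2|b1 b2]|a c|a c|a] /=; rewrite -?map_comp. Qed.

Lemma dcdotE (e : exp) :
  [\/ forall L, dcdot L e = [::], forall L, dcdot L e = L
    | forall L, dcdot L e = [seq KSeq x e | x <- L]].
Proof. by case: e => [p|[||i|b|b1 b2|b1 b2]|a c|a c|a]; constructor. Qed.

Fixpoint pderivs (e : exp) : seq exp :=
  match e with
  | KAct _ => [:: KTest BOne]
  | KTest _ => [::]
  | KPlus a b => pderivs a ++ pderivs b
  | KSeq a b => dcdot (pderivs a) b ++ pderivs b
  | KStar a => dcdot (pderivs a) (KStar a)
  end.

Definition succs (e : exp) : seq exp := map snd (f e).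

Definition closed (U : seq exp) : Prop :=
  forall x, x \in U -> {subset succs x <= U}.

Lemma dcdot_mono (L L' : seq exp) (e : exp) :
  {subset L <= L'} -> {subset dcdot L e <= dcdot L' e}.
Proof.
move=> sLL' y; case: (dcdotE e) => E; rewrite !E //; first exact: sLL'.
by case/mapP=> x xL ->; rewrite map_f // sLL'.
Qed.

Lemma succs_seq (a b : exp) :
  {subset succs (KSeq a b) <= dcdot (succs a) b ++ succs b}.
Proof.
move=> y; rewrite /succs [f (KSeq a b)]/= map_cat cdot_snd !mem_cat.
case/orP=> [-> //|/mapP[z]]; rewrite mem_filter => /andP[_ zb] ->.
by rewrite map_f ?orbT.
Qed.

Lemma dcdot_closed (L M : seq exp) (b : exp) :
  closed L -> {subset succs b <= M} ->
  forall x, x \in dcdot L b -> {subset succs x <= dcdot L b ++ M}.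
Proof.
move=> closedL sbM x xin y; move: xin; case: (dcdotE b) => E; rewrite !E //.
- by move=> xL /(closedL x xL) yL; rewrite mem_cat yL.
- case/mapP=> x' x'L -> /succs_seq; rewrite E !mem_cat.
  case/orP=> [/mapP[z zx' ->]|yb]; last by rewrite sbM ?orbT.
  by rewrite map_f // (closedL x' x'L).
Qed.

(* [pderivs e] contains the derivatives of e and is closed; both parts
   are proved together since the star case needs the first for a. *)
Lemma pderivs_spec (e : exp) :
  {subset succs e <= pderivs e} /\ closed (pderivs e).
Proof.
elim: e => [p|b|a [sa ca] c [sc cc]|a [sa ca] c [sc cc]|a [sa ca]].
- split=> [y|x]; last by rewrite inE => /eqP ->.
  by rewrite /succs /= -map_comp => /mapP[z _ ->]; rewrite inE.
- by split=> // x.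
- split=> [y|x]; rewrite /= ?mem_cat.
    by rewrite /succs /= map_cat mem_cat => /orP[/sa|/sc] ->; rewrite ?orbT.
  by case/orP=> [/ca|/cc] sx y /sx; rewrite mem_cat => ->; rewrite ?orbT.
- split=> [y /succs_seq|x]; rewrite /= !mem_cat.
    by case/orP=> [/(dcdot_mono sa) ->|/sc ->]; rewrite ?orbT.
  case/orP=> [/(dcdot_closed ca sc) //|/cc sx y /sx].
  by rewrite mem_cat => ->; rewrite orbT.
- have s_star : {subset succs (KStar a) <= pderivs (KStar a)}.
    have f_star : f (KStar a) = cdot (f a) (KStar a) by [].
    by move=> y; rewrite /succs f_star cdot_snd; apply: dcdot_mono sa y.
  split=> // x xin y /(dcdot_closed ca s_star xin).
  by rewrite mem_cat orbb.
Qed.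

Definition universe (e : exp) : seq exp := e :: pderivs e.

Lemma universe_closed (e : exp) : closed (universe e).
Proof.
case: (pderivs_spec e) => se ce x; rewrite inE => /orP[/eqP ->|xD] y yx.
  by rewrite inE se ?orbT.
by rewrite inE (ce x xD) ?orbT.
Qed.

Lemma der_closed (U E : seq exp) (ap : atom l * Sigma) :
  closed U -> {subset E <= U} -> {subset der ap E <= U}.
Proof.
move=> closedU sEU y /mapP[z]; rewrite mem_filter.
case/andP=> _ /flatten_mapP[x xE zx] ->.
by apply: (closedU x (sEU x xE)); rewrite map_f.
Qed.

End PartialDerivatives.

Section PairsUpToSetEquality.
Variables (Sigma : finType) (l : nat).
Local Notation exp := (kexp Sigma l).
Local Notation pair := (seq exp * seq exp)%type.
Implicit Types (d x y : pair) (S : seq pair).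

Lemma seteqbP (A B : seq exp) : reflect (A =i B) (seteqb A B).
Proof.
apply: (iffP andP) => [[/allP sAB /allP sBA] x|eqAB].
  by apply/idP/idP => [/sAB|/sBA].
by split; apply/allP => x; rewrite /= eqAB.
Qed.

Lemma pair_eqbP d d' : reflect (d.1 =i d'.1 /\ d.2 =i d'.2) (pair_eqb d d').
Proof.
apply: (iffP andP) => [[/seteqbP ? /seteqbP ?] | [? ?]] //.
by split; apply/seteqbP.
Qed.

Lemma peq_sym d d' : pair_eqb d d' -> pair_eqb d' d.
Proof. by case/pair_eqbP => e1 e2; apply/pair_eqbP; split=> x; rewrite (e1, e2). Qed.

Lemma peq_trans d1 d2 d3 : pair_eqb d1 d2 -> pair_eqb d2 d3 -> pair_eqb d1 d3.
Proof.
case/pair_eqbP => e1 e2 /pair_eqbP[e3 e4].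
by apply/pair_eqbP; split=> x; rewrite (e1, e2) (e3, e4).
Qed.

Definition peq_stable (P : pred pair) : Prop :=
  forall d d', pair_eqb d d' -> P d' -> P d.

Lemma pin_all (P : pred pair) x S : peq_stable P -> pin x S -> all P S -> P x.
Proof. by move=> stP /hasP[y yS xy] /allP allP_S; apply: stP xy (allP_S y yS). Qed.

Lemma all_transfer (P : pred pair) S S' :
  peq_stable P -> all (fun d => pin d S) S' -> all P S -> all P S'.
Proof. by move=> stP /allP sub PS; apply/allP => x /sub /pin_all; apply. Qed.

Lemma pin_stable S : peq_stable (fun d => pin d S).
Proof.
move=> d d' dd' /hasP[y yS d'y]; apply/hasP; exists y => //.
exact: peq_trans d'y.
Qed.

Lemma notpin_stable S : peq_stable (fun d => ~~ pin d S).
Proof. by move=> d d' dd'; apply: contra; apply: pin_stable (peq_sym dd'). Qed.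

End PairsUpToSetEquality.

Section Termination.
Variables (Sigma : finType) (l : nat) (e1 e2 : kexp Sigma l).
Local Notation exp := (kexp Sigma l).
Local Notation pair := (seq exp * seq exp)%type.
Implicit Types (d x y : pair) (S H : seq pair).

Local Notation U1 := (universe e1).
Local Notation U2 := (universe e2).

Definition inU d : bool := all (mem U1) d.1 && all (mem U2) d.2.

Lemma inU_stable : peq_stable inU.
Proof.
move=> d d' /pair_eqbP[e1' e2'] /andP[/allP s1 /allP s2].
by apply/andP; split; apply/allP => x; rewrite (e1', e2') => ?;
  [apply: s1 | apply: s2].
Qed.

Definition code_type : finType :=
  ({ffun 'I_(size U1) -> bool} * {ffun 'I_(size U2) -> bool})%type.

Definition code d : code_type := (signature U1 d.1, signature U2 d.2).

Lemma code_peq d d' : pair_eqb d d' -> code d = code d'.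
Proof.
by case/pair_eqbP => e1' e2'; rewrite /code (signature_eq _ e1') (signature_eq _ e2').
Qed.

Lemma code_inj d d' : inU d -> inU d' -> code d = code d' -> pair_eqb d d'.
Proof.
case/andP=> /allP a1 /allP a2 /andP[/allP b1 /allP b2] [c1 c2].
by apply/pair_eqbP; split; [apply: signature_inj c1 | apply: signature_inj c2].
Qed.

Definition codes H : {set code_type} := [set c | c \in map code H].

Lemma pin_codes x H : pin x H -> code x \in codes H.
Proof. by case/hasP=> y yH xy; rewrite inE (code_peq xy) map_f. Qed.

Definition Inv S H : bool :=
  [&& all inU S, all inU H & all (fun x => ~~ pin x H) S].

Lemma selected_pairs S H d S0 :
  Inv S H -> sseteq S (d :: S0) -> all (fun y => inU y && ~~ pin y H) (d :: S0).
Proof.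
case/and3P=> uS _ nS [_ sub]; apply: all_transfer sub _.
  move=> d1 d2 d12 /andP[u2 n2].
  by rewrite (inU_stable d12 u2) (notpin_stable d12 n2).
by apply/allP => y yS; rewrite (allP uS y yS) (allP nS y yS).
Qed.

Lemma inv_step Sc Hc Sn Hn :
  Inv Sc Hc -> equiv_step (Sn, Hn) (Sc, Hc) -> Inv Sn Hn.
Proof.
move=> inv [d [S0 [eqS dS0 _ [Hn_sub _] [Sn_sub _]]]].
have /andP[/andP[ud _] /allP sel] := selected_pairs inv eqS.
have [_ uHc _] := and3P inv.
have uDer : all inU (derivatives d.1 d.2).
  case/andP: ud => /allP a1 /allP a2.
  apply/allP => _ /mapP[ap _ ->]; apply/andP; split; apply/allP => y.
  - by move/(der_closed (@universe_closed _ _ e1) a1).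
  - by move/(der_closed (@universe_closed _ _ e2) a2).
have S0_fresh : all (fun w => ~~ pin w Hn) S0.
  apply/allP => w wS0; apply/negP.
  move=> /(pin_all (pin_stable (S := d :: Hc))) /(_ Hn_sub) /orP[wd|wHc].
    by move/negP: dS0; apply; apply/hasP; exists w => //; exact: peq_sym.
  by have /andP[_ /negP] := sel w wS0.
apply/and3P; split.
- apply: all_transfer inU_stable Sn_sub _.
  rewrite all_cat; apply/andP; split; first by apply/allP => w /sel /andP[].
  by apply/allP => x; rewrite mem_filter => /andP[_ /(allP uDer)].
- by apply: all_transfer inU_stable Hn_sub _; rewrite /= ud.
- apply: all_transfer (notpin_stable (S := Hn)) Sn_sub _.
  by rewrite all_cat S0_fresh filter_all.
Qed.

Lemma codes_grow Sc Hc Sn Hn :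
  Inv Sc Hc -> equiv_step (Sn, Hn) (Sc, Hc) -> #|codes Hc| < #|codes Hn|.
Proof.
move=> inv [d [S0 [eqS _ _ [_ dHc_sub] _]]].
have /andP[/andP[ud ndH] _] := selected_pairs inv eqS.
case/andP: dHc_sub => dHn /allP Hc_sub.
apply/proper_card/properP; split.
  by apply/subsetP => c; rewrite inE => /mapP[h hH ->]; apply/pin_codes/Hc_sub.
exists (code d); first exact: pin_codes.
rewrite inE; apply/mapP => -[h hH hd]; move/negP: ndH; apply.
have [_ /allP uHc _] := and3P inv.
by apply/hasP; exists h => //; apply: code_inj hd => //; apply: uHc.
Qed.

End Termination.

Theorem proposition4 (Sigma : finType) (l : nat)
  (HSigma : 0 < #|Sigma|) (Hl : 0 < l) (e1 e2 : kexp Sigma l) :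
  Acc (@equiv_step Sigma l) ([:: ([:: e1], [:: e2])], [::]).
Proof.
apply: (@acc_bounded_measure _ _ (fun s => Inv e1 e2 s.1 s.2)
          (fun s => #|codes e1 e2 s.2|) #|code_type e1 e2|).
- move=> [Sc Hc] [Sn Hn] inv st.
  by split; [apply: inv_step st | apply: codes_grow st].
- by move=> s; apply: max_card.
- by rewrite /Inv /inU /= !mem_head.
Qed.
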